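(* Let $n \ge 1$, with red tanks $R_1, \ldots, R_n$ each initially containing $1$ unit of water and blue tanks $B_1, \ldots, B_n$ each initially empty. Consider the strategy: for $i = 1, \ldots, n$ (in order), for $j = 1, \ldots, n$ (in order), equilibrate $R_i$ and $B_j$. Then the total amount of water in the blue tanks at the end of this strategy is at least as large as the total amount in the blue tanks at the end of any finite sequence of pairwise equilibrations applied to the same initial configuration.
   Context: Equilibrating two tanks $a \neq b$ with water levels $x_a, x_b$ replaces both levels by $\frac{x_a+x_b}{2}$ and leaves all other tanks unchanged. *)

From HB Require Import structures.
From mathcomp Require Import all_boot all_order all_algebra.
Set Implicit Arguments. Unset Strict Implicit. Unset Printing Implicit Defensive.
Import Order.TTheory GRing.Theory Num.Theory.
Local Open Scope ring_scope.

(* Tanks: inl i = red tank R_(i+1), inr j = blue tank B_(j+1). *)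
Definition tank (n : nat) : finType := ('I_n + 'I_n)%type.

Definition config (R : Type) (n : nat) := tank n -> R.

Definition equilibrate (R : fieldType) (n : nat) (a b : tank n)
  (x : config R n) : config R n :=
  fun t => if (t == a) || (t == b) then (x a + x b) / 2%:R else x t.

Definition run (R : fieldType) (n : nat) (ops : seq (tank n * tank n))
  (x : config R n) : config R n :=
  foldl (fun y p => equilibrate p.1 p.2 y) x ops.

Definition init (R : fieldType) (n : nat) : config R n :=
  fun t => match t with inl _ => 1 | inr _ => 0 end.

Definition valid_ops (n : nat) (ops : seq (tank n * tank n)) : bool :=
  all (fun p => p.1 != p.2) ops.

Definition strategy (n : nat) : seq (tank n * tank n) :=
  [seq ((inl i : tank n), (inr j : tank n)) | i <- enum 'I_n, j <- enum 'I_n].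

Definition blue_total (R : fieldType) (n : nat) (x : config R n) : R :=
  \sum_(j < n) x (inr j).

Arguments init R n t : clear implicits.
Arguments strategy n : clear implicits.

(* Let [level i j] be the common level of R_i and B_j right after the strategy
   equilibrates them.  In every reachable configuration, a set X of tanks that
   contains k red tanks and misses m blue tanks holds at least
   [water_bound k m] = level 1 m + ... + level k m.  This holds initially, and it
   survives the equilibration of a tank of X with a tank outside X: the new level
   of the former is the average of the sums over X minus it and X plus the
   latter, while [water_bound] is midpoint convex along the corresponding moves of
   (k, m).  For X = the red tanks the bound reads water_bound n n, which is
   exactly what the strategy leaves in the red tanks; since the total amount of
   water is conserved, no sequence of equilibrations fills the blue tanks more. *)

From mathcomp Require Import all_boot all_order all_algebra.
From mathcomp Require Import lra.
Set Implicit Arguments.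
Unset Strict Implicit.
Unset Printing Implicit Defensive.

Import Order.TTheory GRing.Theory Num.Theory.
Local Open Scope ring_scope.

Section Levels.
Variable R : realFieldType.

(* [level 0 j = 0] and [level i 0 = 1] are the initial levels of B_j and R_i. *)
Fixpoint level (i : nat) : nat -> R :=
  match i with
  | 0 => fun _ => 0
  | i'.+1 => fix level_row j :=
      match j with 0 => 1 | j'.+1 => (level_row j' + level i' j'.+1) / 2 end
  end.

Lemma level0n j : level 0 j = 0. Proof. by []. Qed.
Lemma levelS0 i : level i.+1 0 = 1. Proof. by []. Qed.
Lemma levelSS i j : level i.+1 j.+1 = (level i.+1 j + level i j.+1) / 2.
Proof. by []. Qed.

Lemma level_in01 i j : 0 <= level i j <= 1.
Proof.
elim: i j => [|i IHi] j; first by rewrite level0n lexx ler01.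
elim: j => [|j IHj]; first by rewrite levelS0 ler01 lexx.
rewrite levelSS; move: IHj (IHi j.+1) => /andP[? ?] /andP[? ?].
by apply/andP; split; lra.
Qed.

Lemma level_ge0 i j : 0 <= level i j. Proof. by case/andP: (level_in01 i j). Qed.
Lemma level_le1 i j : level i j <= 1. Proof. by case/andP: (level_in01 i j). Qed.

Lemma level_blueS i j : level i j.+1 <= level i j.
Proof.
elim: i j => [|i IHi] j; first by rewrite !level0n.
elim: j => [|j IHj]; first by rewrite levelS0 level_le1.
by have := levelSS i j.+1; have := levelSS i j; have := IHi j.+1; lra.
Qed.

Lemma level_redS i j : level i j <= level i.+1 j.
Proof.
elim: i j => [|i IHi] j; first by rewrite level0n level_ge0.
elim: j => [|j IHj]; first by rewrite !levelS0.
by have := levelSS i.+1 j; have := levelSS i j; have := IHi j.+1; lra.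
Qed.

Definition water_bound (k m : nat) : R := \sum_(i < k) level i.+1 m.

Lemma water_boundS k m : water_bound k.+1 m = water_bound k m + level k.+1 m.
Proof. by rewrite /water_bound big_ord_recr. Qed.

(* Telescoping the recurrence [levelSS] over the reds. *)
Lemma water_bound_blueS k m : water_bound k m = water_bound k m.+1 + level k m.+1.
Proof.
elim: k => [|k IHk]; first by rewrite /water_bound !big_ord0 level0n addr0.
by rewrite !water_boundS IHk levelSS; lra.
Qed.

Lemma water_bound_le k m : water_bound k m <= k%:R.
Proof.
elim: k => [|k IHk]; first by rewrite /water_bound big_ord0.
by rewrite water_boundS -natr1; have := level_le1 k.+1 m; lra.
Qed.

Lemma water_bound_red_red k m :
  2 * water_bound k.+1 m <= water_bound k m + water_bound k.+2 m.
Proof. by rewrite !water_boundS; have := level_redS k.+1 m; lra. Qed.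

Lemma water_bound_red_blue k m :
  2 * water_bound k.+1 m.+1 = water_bound k m.+1 + water_bound k.+1 m.
Proof. by rewrite (water_bound_blueS k.+1 m) !water_boundS; lra. Qed.

Lemma water_bound_blue_red k m :
  2 * water_bound k m <= water_bound k m.+1 + water_bound k.+1 m.
Proof.
rewrite water_boundS (water_bound_blueS k m).
by have := level_blueS k m; have := level_redS k m; lra.
Qed.

Lemma water_bound_blue_blue k m :
  2 * water_bound k m.+1 <= water_bound k m.+2 + water_bound k m.
Proof.
rewrite (water_bound_blueS k m) (water_bound_blueS k m.+1).
by have := level_blueS k m.+1; lra.
Qed.

End Levels.
Arguments level : simpl never.

Section TankSets.
Variable n : nat.
Implicit Types (X : {set tank n}) (i j : 'I_n).

Definition reds X : {set 'I_n} := [set i | (inl i : tank n) \in X].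
Definition blues_out X : {set 'I_n} := [set j | (inr j : tank n) \notin X].

Lemma reds_D1r X j : reds (X :\ inr j) = reds X.
Proof. by apply/setP => i; rewrite !inE. Qed.
Lemma reds_U1r X j : reds (inr j |: X) = reds X.
Proof. by apply/setP => i; rewrite !inE. Qed.
Lemma blues_out_D1l X i : blues_out (X :\ inl i) = blues_out X.
Proof. by apply/setP => j; rewrite !inE. Qed.
Lemma blues_out_U1l X i : blues_out (inl i |: X) = blues_out X.
Proof. by apply/setP => j; rewrite !inE. Qed.

Lemma card_reds_D1 X i : inl i \in X -> #|reds X| = #|reds (X :\ inl i)|.+1.
Proof.
move=> iX; have -> : reds (X :\ inl i) = reds X :\ i.
  by apply/setP => i'; rewrite !inE andbC.
by rewrite (cardsD1 i) inE iX.
Qed.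

Lemma card_reds_U1 X i : inl i \notin X -> #|reds (inl i |: X)| = #|reds X|.+1.
Proof.
move=> iX; have -> : reds (inl i |: X) = i |: reds X.
  by apply/setP => i'; rewrite !inE.
by rewrite cardsU1 inE iX.
Qed.

Lemma card_blues_out_D1 X j :
  inr j \in X -> #|blues_out (X :\ inr j)| = #|blues_out X|.+1.
Proof.
move=> jX; have -> : blues_out (X :\ inr j) = j |: blues_out X.
  by apply/setP => j'; rewrite !inE negb_and negbK.
by rewrite cardsU1 inE jX.
Qed.

Lemma card_blues_out_U1 X j :
  inr j \notin X -> #|blues_out X| = #|blues_out (inr j |: X)|.+1.
Proof.
move=> jX; have -> : blues_out (inr j |: X) = blues_out X :\ j.
  by apply/setP => j'; rewrite !inE negb_or andbC.
by rewrite (cardsD1 j) inE jX.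
Qed.

End TankSets.

Section Invariant.
Variables (R : realFieldType) (n : nat).
Implicit Types (X : {set tank n}) (a b : tank n) (x : config R n).

Definition potential X : R := water_bound R #|reds X| #|blues_out X|.

Lemma potential_midpoint X a b : a \in X -> b \notin X ->
  2 * potential X <= potential (X :\ a) + potential (b |: X).
Proof.
rewrite /potential; case: a => [i|j] aX; case: b => [i'|j'] bX.
- rewrite !blues_out_D1l !blues_out_U1l (card_reds_U1 bX) (card_reds_D1 aX).
  exact: water_bound_red_red.
- rewrite blues_out_D1l reds_U1r (card_blues_out_U1 bX) (card_reds_D1 aX).
  by rewrite water_bound_red_blue.
- rewrite reds_D1r blues_out_U1l (card_reds_U1 bX) (card_blues_out_D1 aX).
  exact: water_bound_blue_red.
- rewrite reds_D1r reds_U1r (card_blues_out_D1 aX) (card_blues_out_U1 bX).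
  exact: water_bound_blue_blue.
Qed.

Lemma equilibrate_notin a b x t :
  t != a -> t != b -> equilibrate a b x t = x t.
Proof. by rewrite /equilibrate => /negbTE-> /negbTE->. Qed.

Lemma sum_equilibrate_in_out a b x X : a \in X -> b \notin X ->
  \sum_(t in X) equilibrate a b x t = (x a + x b) / 2 + \sum_(t in X :\ a) x t.
Proof.
move=> aX bX; rewrite (big_setD1 a aX) /= {1}/equilibrate eqxx; congr (_ + _).
apply: eq_bigr => t /setD1P[ta tX]; apply: equilibrate_notin => //.
by apply: contraNneq bX => <-.
Qed.

Lemma sum_equilibrate_in_in a b x X : a != b -> a \in X -> b \in X ->
  \sum_(t in X) equilibrate a b x t = \sum_(t in X) x t.
Proof.
move=> ab aX bX; have bXa : b \in X :\ a by rewrite !inE eq_sym ab.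
rewrite (big_setD1 a aX) (big_setD1 b bXa) (big_setD1 a aX) (big_setD1 b bXa) /=.
rewrite /equilibrate !eqxx orbT /=.
rewrite (eq_bigr x) => [|t /setD1P[tb /setD1P[ta _]]]; last exact: equilibrate_notin.
lra.
Qed.

Lemma sum_equilibrate_out_out a b x X : a \notin X -> b \notin X ->
  \sum_(t in X) equilibrate a b x t = \sum_(t in X) x t.
Proof.
move=> aX bX; apply: eq_bigr => t tX; apply: equilibrate_notin.
- by apply: contraNneq aX => <-.
- by apply: contraNneq bX => <-.
Qed.

Definition dominates_potential x := forall X, potential X <= \sum_(t in X) x t.

Lemma potential_le_sum_equilibrate a b x X :
  dominates_potential x -> a \in X -> b \notin X ->
  potential X <= \sum_(t in X) equilibrate a b x t.
Proof.
move=> domx aX bX; rewrite sum_equilibrate_in_out //.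
have := domx (b |: X); rewrite (big_setU1 _ bX) (big_setD1 a aX) /=.
by have := domx (X :\ a); have := potential_midpoint aX bX; lra.
Qed.

Lemma dominates_potential_equilibrate a b x : a != b ->
  dominates_potential x -> dominates_potential (equilibrate a b x).
Proof.
move=> ab domx X; case: (boolP (a \in X)) => aX; case: (boolP (b \in X)) => bX.
- by rewrite sum_equilibrate_in_in.
- exact: potential_le_sum_equilibrate.
- rewrite (eq_bigr (equilibrate b a x)) => [|t _]; last first.
    by rewrite /equilibrate orbC addrC.
  exact: potential_le_sum_equilibrate.
- by rewrite sum_equilibrate_out_out.
Qed.

Lemma dominates_potential_run ops x : valid_ops ops ->
  dominates_potential x -> dominates_potential (run ops x).
Proof.
elim: ops x => [|[a b] ops IHops] x //= /andP[ab vops] domx.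
exact/IHops/dominates_potential_equilibrate.
Qed.

Lemma dominates_potential_init : dominates_potential (init R n).
Proof.
move=> X; rewrite (big_sumType _ (mem X)) /= big1_eq addr0.
rewrite (eq_bigl (mem (reds X))) => [|i]; last by rewrite /= inE.
by rewrite sumr_const; apply: water_bound_le.
Qed.

End Invariant.

Section Strategy.
Variables (R : realFieldType) (n : nat).
Implicit Type x : config R n.
Local Notation level := (level R).

(* The state of the strategy once [R_(i+1)] has been equilibrated with [B_1, ..., B_k]. *)
Definition strategy_state (i k : nat) x :=
  (forall i' : 'I_n, x (inl i') =
     if (i' < i)%N then level i'.+1 n else if i' == i :> nat then level i.+1 k else 1)
  /\ (forall j : 'I_n, x (inr j) = if (j < k)%N then level i.+1 j.+1 else level i j.+1).

Lemma run_rcons ops p x : run (rcons ops p) x = equilibrate p.1 p.2 (run ops x).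
Proof. exact: foldl_rcons. Qed.

Lemma run_cat ops1 ops2 x : run (ops1 ++ ops2) x = run ops2 (run ops1 x).
Proof. exact: foldl_cat. Qed.

Lemma strategy_state_init : strategy_state 0 0 (init R n).
Proof. by split=> [i|j] //=; case: (i == 0%N :> nat). Qed.

Lemma strategy_state_step (i j : 'I_n) x : strategy_state i j x ->
  strategy_state i j.+1 (equilibrate (inl i) (inr j) x).
Proof.
move=> [reds_x blues_x].
have avg : (x (inl i) + x (inr j)) / 2 = level i.+1 j.+1.
  by rewrite reds_x blues_x !ltnn eqxx levelSS.
split=> [i'|j']; rewrite /equilibrate avg.
- case: (i' =P i) => [->|/eqP neq]; first by rewrite eqxx ltnn /= eqxx.
  have neq_nat : (i' == i :> nat) = false by exact: negbTE neq.
  by rewrite orbF reds_x -[inl i' == _]/(i' == i) (negbTE neq) neq_nat.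
- case: (j' =P j) => [->|/eqP neq]; first by rewrite eqxx orbT ltnSn.
  have neq_nat : (j' == j :> nat) = false by exact: negbTE neq.
  by rewrite /= ltnS leq_eqVlt neq_nat blues_x -[inr j' == _]/(j' == j) (negbTE neq).
Qed.

Lemma strategy_state_row (i : 'I_n) k x : (k <= n)%N -> strategy_state i 0 x ->
  strategy_state i k
    (run [seq ((inl i : tank n), (inr j : tank n)) | j <- take k (enum 'I_n)] x).
Proof.
elim: k => [|k IHk] lekn sx; first by rewrite take0.
rewrite (take_nth i) ?size_enum_ord // map_rcons run_rcons /=.
have idx_k : nth i (enum 'I_n) k = k :> nat by rewrite nth_enum_ord.
by move: (IHk (ltnW lekn) sx); rewrite -{1}idx_k => /strategy_state_step; rewrite idx_k.
Qed.

Lemma strategy_state_next_red (i : 'I_n) x :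
  strategy_state i n x -> strategy_state i.+1 0 x.
Proof.
move=> [reds_x blues_x]; split=> [i'|j]; last by rewrite blues_x ltn_ord.
by rewrite reds_x levelS0 ltnS; case: ltngtP => [|_|->]; rewrite ?if_same.
Qed.

Lemma strategy_state_prefix k : (k <= n)%N ->
  strategy_state k 0
    (run [seq ((inl a : tank n), (inr b : tank n))
           | a <- take k (enum 'I_n), b <- enum 'I_n] (init R n)).
Proof.
elim: k => [|k IHk] lekn; first by rewrite take0; apply: strategy_state_init.
have i0 : 'I_n := Ordinal lekn.
rewrite (take_nth i0) ?size_enum_ord // allpairs_rcons run_cat.
set i := nth i0 (enum 'I_n) k; have idx_k : i = k :> nat by rewrite nth_enum_ord.
rewrite -idx_k; apply: strategy_state_next_red.
have := @strategy_state_row i n _ (leqnn n); rewrite take_oversize ?size_enum_ord //.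
by apply; rewrite idx_k; apply/IHk/ltnW.
Qed.

Lemma strategy_red_level (i : 'I_n) :
  run (strategy n) (init R n) (inl i) = level i.+1 n.
Proof.
have [reds_x _] := strategy_state_prefix (leqnn n).
by rewrite take_oversize ?size_enum_ord // in reds_x; rewrite reds_x ltn_ord.
Qed.

End Strategy.

Section Conservation.
Variables (R : realFieldType) (n : nat).
Implicit Type x : config R n.

Definition red_total x : R := \sum_(i < n) x (inl i).

Lemma sum_tanks x : \sum_t x t = red_total x + blue_total x.
Proof. exact: big_sumType. Qed.

Lemma sum_tanks_run ops x : valid_ops ops -> \sum_t run ops x t = \sum_t x t.
Proof.
elim: ops x => [|[a b] ops IHops] x //= /andP[ab vops].
rewrite IHops //; have := sum_equilibrate_in_in x ab (in_setT a) (in_setT b).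
by rewrite !(eq_bigl predT) // => t; rewrite in_setT.
Qed.

Definition red_tanks : {set tank n} := [set t | if t is inl _ then true else false].

Lemma potential_red_tanks : potential R red_tanks = water_bound R n n.
Proof.
rewrite /potential; have -> : reds red_tanks = setT by apply/setP => i; rewrite !inE.
have -> : blues_out red_tanks = setT by apply/setP => j; rewrite !inE.
by rewrite cardsT card_ord.
Qed.

Lemma sum_red_tanks x : \sum_(t in red_tanks) x t = red_total x.
Proof.
rewrite (big_sumType _ (mem red_tanks)) /= [X in _ + X]big_pred0 => [|j].
  by rewrite addr0; apply: eq_bigl => i; rewrite inE.
by rewrite inE.
Qed.

Lemma valid_strategy : valid_ops (strategy n).
Proof. by apply/allP => p /allpairsP[[i j] [_ _ ->]]. Qed.

End Conservation.

Theorem mainTheorem4 (R : realFieldType) (n : nat) (hn : (1 <= n)%N)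
  (ops : seq (tank n * tank n)) (hops : valid_ops ops) :
  blue_total (run ops (init R n)) <= blue_total (run (strategy n) (init R n)).
Proof.
have red_ops := dominates_potential_run hops (@dominates_potential_init R n) (red_tanks n).
rewrite potential_red_tanks sum_red_tanks in red_ops.
have red_strategy : red_total (run (strategy n) (init R n)) = water_bound R n n.
  by apply: eq_bigr => i _; rewrite strategy_red_level.
have := sum_tanks_run (init R n) hops.
have := sum_tanks_run (init R n) (valid_strategy n).
by rewrite !sum_tanks; lra.
Qed.
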